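(* Let $G$ be a finite undirected graph, $k$ and $\tau\ge1$ integers, and $e=(u,v)\in E(G)$. If $d_\tau(u,G)\le k-1$ or $d_\tau(v,G)\le k-1$, then $\phi_\tau(e,G)\le k$.
   Context: Graphs are finite, simple, undirected and unweighted; paths may repeat vertices and their length is the number of edges. For vertices $v,u$ of a graph $H$, $u$ is $\tau$-hop reachable from $v$ in $H$ if there is a path between them in $H$ of length at most $\tau$. $N_\tau(v,H)$ is the set of vertices $u\ne v$ that are $\tau$-hop reachable from $v$ in $H$, and $d_\tau(v,H)=|N_\tau(v,H)|$. For an edge $e=(u,v)$ of $H$, $\Delta_\tau(e,H)=N_\tau(u,H)\cap N_\tau(v,H)$ and $\mathrm{sup}_\tau(e,H)=|\Delta_\tau(e,H)|$. The $(k,\tau)$-truss of $G$ is the maximal subgraph $G'$ of $G$ such that $\mathrm{sup}_\tau(e,G')\ge k-2$ for every $e\in E(G')$ (supports computed inside $G'$) and no more edges of $G$ can be added while keeping this property; a subgraph is determined by its edge set. The higher-order truss number $\phi_\tau(e,G)$ is the maximum $k$ such that $e$ belongs to the $(k,\tau)$-truss of $G$. *)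

From mathcomp Require Import all_boot.
Set Implicit Arguments. Unset Strict Implicit. Unset Printing Implicit Defensive.

Definition simple_graph (T : finType) (g : rel T) : Prop :=
  symmetric g /\ irreflexive g.

(* A subgraph of g is determined by its edge set: a symmetric subrelation of g. *)
Definition subgraph (T : finType) (g h : rel T) : Prop :=
  symmetric h /\ (forall x y, h x y -> g x y).

(* u is tau-hop reachable from v in h: there is a path (walk, vertices may repeat)
   v = x_0, x_1, ..., x_n = u with n <= tau edges of h. *)
Definition hop_reach (T : finType) (h : rel T) (tau : nat) (v u : T) : bool :=
  [exists n : 'I_tau.+1, exists s : n.-tuple T, path h v s && (last v s == u)].

Definition Nhop (T : finType) (h : rel T) (tau : nat) (v : T) : {set T} :=
  [set u | (u != v) && hop_reach h tau v u].

Definition dhop (T : finType) (h : rel T) (tau : nat) (v : T) : nat :=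
  #|Nhop h tau v|.

Definition sup_hop (T : finType) (h : rel T) (tau : nat) (u v : T) : nat :=
  #|Nhop h tau u :&: Nhop h tau v|.

Definition truss_valid (T : finType) (g h : rel T) (k tau : nat) : Prop :=
  subgraph g h /\ (forall x y, h x y -> k - 2 <= sup_hop h tau x y).

Definition is_truss (T : finType) (g h : rel T) (k tau : nat) : Prop :=
  truss_valid g h k tau /\
  (forall h', truss_valid g h' k tau -> (forall x y, h x y -> h' x y) ->
              forall x y, h' x y -> h x y).

Definition in_truss (T : finType) (g : rel T) (k tau : nat) (u v : T) : Prop :=
  exists h, is_truss g h k tau /\ h u v.

From mathcomp Require Import all_boot zify.
Set Implicit Arguments. Unset Strict Implicit. Unset Printing Implicit Defensive.

(* An edge [(a, b)] of a valid subgraph [h] puts [b] into [N_tau(a, h)] but not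
   into [N_tau(b, h)], so [sup_tau((a, b), h)] is strictly smaller than
   [d_tau(a, h)], which in turn is at most [d_tau(a, g)] since [h] is a
   subgraph of [g].  Validity gives [k - 2 <= sup_tau((a, b), h)], hence
   [k <= d_tau(a, g) + 1]. *)

Section HopNeighbourhoods.

Variables (T : finType) (tau : nat).

Lemma hop_reach_sub (g h : rel T) a b :
  subrel h g -> hop_reach h tau a b -> hop_reach g tau a b.
Proof.
move=> hg /existsP[n /existsP[s /andP[hs sa]]].
apply/existsP; exists n; apply/existsP; exists s.
by rewrite sa andbT (sub_path hg hs).
Qed.

Lemma Nhop_sub (g h : rel T) a : subrel h g -> Nhop h tau a \subset Nhop g tau a.
Proof.
move=> hg; apply/subsetP => x; rewrite !inE => /andP[-> /=].
exact: hop_reach_sub.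
Qed.

Lemma dhop_sub (g h : rel T) a : subrel h g -> dhop h tau a <= dhop g tau a.
Proof. by move=> hg; apply/subset_leq_card/Nhop_sub. Qed.

Lemma Nhop_edge (h : rel T) a b :
  0 < tau -> a != b -> h a b -> b \in Nhop h tau a.
Proof.
move=> tau_gt0 ab hab; rewrite inE eq_sym ab /=.
apply/existsP; exists (Ordinal (tau_gt0 : 1 < tau.+1)); apply/existsP.
by exists [tuple b]; rewrite /= hab eqxx.
Qed.

Lemma sup_hop_lt_dhop (h : rel T) a b :
  0 < tau -> irreflexive h -> h a b -> sup_hop h tau a b < dhop h tau a.
Proof.
move=> tau_gt0 irr hab.
have ab : a != b by apply: contraTneq hab => ->; rewrite irr.
apply/proper_card/properP; split; first exact: subsetIl.
by exists b; [apply: Nhop_edge | rewrite !inE eqxx andbF].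
Qed.

Lemma truss_valid_le_dhopS (g h : rel T) k a b :
  0 < tau -> irreflexive g -> truss_valid g h k tau -> h a b ->
  k <= (dhop g tau a).+1.
Proof.
move=> tau_gt0 irr [[_ hg] valid] hab.
have irr_h : irreflexive h by move=> x; apply/negbTE/negP => /hg; rewrite irr.
have := sup_hop_lt_dhop tau_gt0 irr_h hab.
have := dhop_sub a hg.
have := valid _ _ hab.
lia.
Qed.

End HopNeighbourhoods.

Theorem lemma7 (T : finType) (g : rel T) (k tau : nat) (u v : T) :
  simple_graph g -> 1 <= tau -> g u v ->
  (dhop g tau u < k \/ dhop g tau v < k) ->
  forall k' : nat, in_truss g k' tau u v -> k' <= k.
Proof.
move=> [_ irr] tau_gt0 _ small_deg k' [h [[valid _] huv]].
have hvu : h v u by rewrite valid.1.1.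
have le_u := truss_valid_le_dhopS tau_gt0 irr valid huv.
have le_v := truss_valid_le_dhopS tau_gt0 irr valid hvu.
case: small_deg; lia.
Qed.
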